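(* Let $G,H$ be graded groups, $U\subset G$ open, $\Phi:U\to H$ a smooth map and $x\in U$ (no Pansu differentiability or filtration-preservation is assumed). Then for all $i,j\ge1$ and $V\in\mathfrak g_j$, $$\lim_{\varepsilon\to0^+}\varepsilon^{-i}\,\mathrm{pr}_{\mathfrak h,i}\circ\ln_H\big(\Phi_x(\exp_G(\varepsilon^jV))\big)=\begin{cases}0&\text{if } j>i,\\ \mathrm{pr}_{\mathfrak h,i}(\mathfrak d_x\Phi(V))&\text{if } j=i.\end{cases}$$
   Context: A graded group is a connected, simply connected nilpotent real Lie group $G$ whose Lie algebra $\mathfrak g=\bigoplus_{j\ge1}\mathfrak g_j$ (finitely many nonzero) satisfies $[\mathfrak g_i,\mathfrak g_j]\subset\mathfrak g_{i+j}$; $\exp_G$ is a global diffeomorphism with inverse $\ln_G$. $H$ is a graded group with Lie algebra $\mathfrak h=\bigoplus_j\mathfrak h_j$, and $\mathrm{pr}_{\mathfrak h,i}$ denotes the projection onto $\mathfrak h_i$ along $\bigoplus_{j\neq i}\mathfrak h_j$. Notation: $\Phi_x(y):=\Phi(x)^{-1}\Phi(xy)$ (defined when $xy\in U$). $\mathfrak d_x\Phi:=(D_0L_{\Phi(x)})^{-1}\circ D_x\Phi\circ D_0L_x:\mathfrak g\to\mathfrak h$, where $D_0L_x$ is the differential at the identity of the left translation by $x$. *)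

From HB Require Import structures.
From mathcomp Require Import all_boot all_order all_algebra.
From mathcomp Require Import all_classical all_reals all_analysis.
Set Implicit Arguments. Unset Strict Implicit. Unset Printing Implicit Defensive.
Import Order.TTheory GRing.Theory Num.Theory.
Import numFieldNormedType.Exports.
Local Open Scope classical_set_scope.
Local Open Scope ring_scope.

Fixpoint iterD {R : numFieldType} {V W : normedModType R}
    (vs : seq V) (f : V -> W) : V -> W :=
  match vs with
  | [::] => f
  | v :: vs' => fun x => 'D_v (iterD vs' f) x
  end.

Definition smooth_on {R : numFieldType} {V W : normedModType R}
    (U : set V) (f : V -> W) : Prop :=
  forall (vs : seq V) (x : V), U x ->
    {for x, continuous (iterD vs f)} /\ (forall v : V, derivable (iterD vs f) x v).

Definition dil_w {R : realType} {n : nat} (w : 'I_n -> nat) (lam : R)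
    (x : 'rV[R]_n) : 'rV[R]_n :=
  \row_k (lam ^+ w k * x 0 k).

(* A graded group, presented in exponential coordinates with respect to a
   basis of its Lie algebra adapted to the grading: the carrier is R^n
   (= the Lie algebra g, via exp_G), the basis vector e_k lies in the layer
   g_(gdeg k) (gdeg k >= 1), and the group law is smooth, has the straight
   lines through 0 as one-parameter subgroups (i.e. exp_G = ln_G = id), and
   the dilations (which act by lam^j on g_j) are group automorphisms
   (equivalently [g_i, g_j] <= g_(i+j)). *)
Record GradedGroup (R : realType) (n : nat) : Type := {
  gmul : 'rV[R]_n -> 'rV[R]_n -> 'rV[R]_n;
  gdeg : 'I_n -> nat;
  gdeg_pos : forall k, (0 < gdeg k)%N;
  gmulA : associative gmul;
  gmul0x : left_id 0 gmul;
  gmulx0 : right_id 0 gmul;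
  gmul_line : forall (v : 'rV[R]_n) (s t : R), gmul (s *: v) (t *: v) = (s + t) *: v;
  gmul_smooth : smooth_on setT (fun p : 'rV[R]_n * 'rV[R]_n => gmul p.1 p.2);
  gmul_dil : forall lam : R, 0 < lam -> forall x y,
      dil_w gdeg lam (gmul x y) = gmul (dil_w gdeg lam x) (dil_w gdeg lam y)
}.

Definition expG {R : realType} {n : nat} (G : GradedGroup R n) (v : 'rV[R]_n) := v.
Definition lnG {R : realType} {n : nat} (G : GradedGroup R n) (x : 'rV[R]_n) := x.

(* Group inverse: in exponential coordinates x^{-1} = -x
   (x * (-x) = (1 - 1) x = 0 by gmul_line). *)
Definition ginv {R : realType} {n : nat} (G : GradedGroup R n) (x : 'rV[R]_n) := - x.

Definition in_layer {R : realType} {n : nat} (G : GradedGroup R n) (j : nat)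
    (V : 'rV[R]_n) : Prop :=
  forall k, gdeg G k != j -> V 0 k = 0.

Definition pr {R : realType} {n : nat} (G : GradedGroup R n) (i : nat)
    (y : 'rV[R]_n) : 'rV[R]_n :=
  \row_k (if gdeg G k == i then y 0 k else 0).

Definition Phix {R : realType} {n m : nat} (G : GradedGroup R n) (H : GradedGroup R m)
    (Phi : 'rV[R]_n -> 'rV[R]_m) (x y : 'rV[R]_n) : 'rV[R]_m :=
  gmul H (ginv H (Phi x)) (Phi (gmul G x y)).

(* matrix of D_0 L_p (row-vector convention: W |-> W *m D0L G p) *)
Definition D0L {R : realType} {n : nat} (G : GradedGroup R n) (p : 'rV[R]_n) : 'M[R]_n :=
  \matrix_(k, l) (('D_(delta_mx 0 k) (gmul G p) 0) 0 l).

Definition dfrak {R : realType} {n m : nat} (G : GradedGroup R n) (H : GradedGroup R m)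
    (Phi : 'rV[R]_n -> 'rV[R]_m) (x V : 'rV[R]_n) : 'rV[R]_m :=
  ('D_(V *m D0L G x) Phi x) *m invmx (D0L H (Phi x)).

From Pilot Require Import Defs.
From HB Require Import structures.
From mathcomp Require Import all_boot all_order all_algebra.
From mathcomp Require Import all_classical all_reals all_analysis.
Import Order.TTheory GRing.Theory Num.Theory.
Import numFieldNormedType.Exports.
Local Open Scope classical_set_scope.
Local Open Scope ring_scope.

(* Put g(t) := Phi_x(exp_G(t V)) = Phi(x)^-1 Phi(x (t V)).  By the chain rule g is
   differentiable at 0, with g(0) = 0 and g'(0) = d_x Phi (V), because the inverse
   of D_0 L_Phi(x) is D_Phi(x) L_Phi(x)^-1.  Hence eps^-j g(eps^j) tends to
   d_x Phi (V) as eps -> 0+, and eps^-i pr_i g(eps^j) = eps^(j-i) pr_i(eps^-j g(eps^j))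
   tends to 0 if j > i and to pr_i (d_x Phi (V)) if j = i.
   Frechet differentiability of Phi and of the left translations comes from the
   classical fact that continuous partial derivatives imply differentiability:
   telescope the increment along the coordinate axes and apply the mean value
   theorem on each segment. *)

Set Implicit Arguments.
Unset Strict Implicit.

Section MatrixNorm.
Variables (R : realType) (p q : nat).
Implicit Type M : 'M[R]_(p, q).

Lemma mx_norm_le M (r : R) : 0 <= r -> (forall i j, `|M i j| <= r) -> `|M| <= r.
Proof.
move=> r0 Mr; rewrite [leLHS]/Num.Def.normr /= mx_normrE.
by apply: bigmax_le => // -[i j] _; exact: Mr.
Qed.

Lemma mx_coord_le_norm M i j : `|M i j| <= `|M|.
Proof.
rewrite [leRHS]/Num.Def.normr /= mx_normrE.
exact: le_trans (le_bigmax _ _ (i, j)).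
Qed.

End MatrixNorm.

Section RealDerivatives.
Variable R : realType.

Lemma is_derive_coord (V : normedModType R) p q (f : V -> 'M[R]_(p, q)) y v i j :
  derivable f y v -> is_derive y v (fun z => f z i j) ('D_v f y i j).
Proof.
move=> df.
have := continuous_cvg _ (@coord_continuous R p q i j ('D_v f y)) df.
have -> : (fun M : 'M[R]_(p, q) => M i j) \o
   (fun h : R => h^-1 *: ((f \o shift y) (h *: v) - f y)) =
   (fun h : R => h^-1 *: (((fun z => f z i j) \o shift y) (h *: v) - f y i j)).
  by apply: funext => h /=; rewrite !mxE.
move=> Df; apply: DeriveDef; first by apply/cvg_ex; eexists; exact: Df.
by rewrite /derive; apply: cvg_lim => //; exact: Df.
Qed.

Lemma is_derive_along_line (V W : normedModType R) (f : V -> W) y v c :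
  derivable f (y + c *: v) v ->
  is_derive c 1 (fun t => f (y + t *: v)) ('D_v f (y + c *: v)).
Proof.
have E : (fun h : R => h^-1 *: (((fun t => f (y + t *: v)) \o shift c) (h *: 1)
            - f (y + c *: v))) =
         (fun h : R => h^-1 *: ((f \o shift (y + c *: v)) (h *: v) - f (y + c *: v))).
  apply: funext => h /=.
  by rewrite [h *: 1]mulr1 scalerDl addrCA addrA.
by move=> df; apply: DeriveDef; rewrite /derivable /derive E.
Qed.

Lemma MVT_from0 (f df : R -> R) (s : R) :
  (forall c : R, `|c| <= `|s| -> is_derive c 1 f (df c)) ->
  exists2 c, `|c| <= `|s| & f s - f 0 = df c * s.
Proof.
move=> Df.
have MVT_in a b : a <= b -> (forall c, a <= c <= b -> `|c| <= `|s|) ->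
    exists2 c, `|c| <= `|s| & f b - f a = df c * (b - a).
  move=> ab abs.
  have Dab c : c \in `]a, b[ -> is_derive c 1 f (df c).
    by rewrite in_itv => /andP[ac cb]; apply/Df/abs; rewrite !ltW.
  have Cab : {within `[a, b], continuous f}.
    apply/continuous_in_subspaceT => c; rewrite inE /= in_itv /= => /abs /Df [+ _].
    by move=> /derivable1_diffP /differentiable_continuous.
  have [c cab ->] := MVT_segment ab Dab Cab.
  by exists c => //; apply: abs; move: cab; rewrite in_itv /=.
have [s0|s0] := leP 0 s.
  have [|c cs ->] := MVT_in 0 s s0; last by exists c; rewrite // subr0.
  by move=> c /andP[c0 cs]; rewrite !ger0_norm // (le_trans c0).
have [|c cs E] := MVT_in s 0 (ltW s0).
  by move=> c /andP[sc c0]; rewrite !ler0_norm ?lerN2 // ltW.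
by exists c => //; rewrite -opprB E sub0r mulrN opprK.
Qed.

End RealDerivatives.

Section RowTruncation.
Variables (R : realType) (n : nat).
Implicit Type h : 'rV[R]_n.

Definition row_trunc (k : nat) h : 'rV[R]_n :=
  \row_l (if (l < k)%N then h 0 l else 0).

Lemma row_trunc0 h : row_trunc 0 h = 0.
Proof. by apply/rowP => l; rewrite !mxE. Qed.

Lemma row_trunc_full h : row_trunc n h = h.
Proof. by apply/rowP => l; rewrite !mxE ltn_ord. Qed.

Lemma row_truncS h (k : 'I_n) :
  row_trunc k.+1 h = row_trunc k h + h 0 k *: delta_mx 0 k.
Proof.
apply/rowP => l; rewrite !mxE eqxx /= ltnS leq_eqVlt.
have [->|lk] := eqVneq l k; first by rewrite eqxx ltnn mulr1 add0r.
by rewrite mulr0 addr0 (negbTE (lk : l != k :> nat)).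
Qed.

Lemma norm_row_trunc_line h (k : 'I_n) (c : R) :
  `|c| <= `|h 0 k| -> `|row_trunc k h + c *: delta_mx 0 k| <= `|h|.
Proof.
move=> ck; apply: mx_norm_le => // i l; rewrite (ord1 i) !mxE eqxx /=.
have [->|lk] := eqVneq l k.
  by rewrite ltnn mulr1 add0r (le_trans ck) ?mx_coord_le_norm.
rewrite mulr0 addr0; case: ifP => _; last by rewrite normr0.
exact: mx_coord_le_norm.
Qed.

End RowTruncation.

Section ContinuousPartials.
Variables (R : realType) (n m : nat) (f : 'rV[R]_n -> 'rV[R]_m) (x : 'rV[R]_n).
Local Notation e k := (delta_mx 0 k : 'rV[R]_n).
Local Notation D k := ('D_(e k) f x).

Definition lin_partials (h : 'rV[R]_n) : 'rV[R]_m := \sum_(k < n) h 0 k *: D k.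

Lemma lin_partials_is_linear : linear lin_partials.
Proof.
move=> a u v; rewrite /lin_partials scaler_sumr -big_split.
by apply: eq_bigr => k _ /=; rewrite !mxE scalerDl scalerA.
Qed.

Lemma continuous_lin_partials : continuous lin_partials.
Proof.
apply: continuous_big => [z|k _ h]; first exact: add_continuous.
by apply: continuousZr_tmp; exact: coord_continuous.
Qed.

Lemma increment_telescope h :
  f (x + h) - f x - lin_partials h =
  \sum_(k < n) (f (x + row_trunc k.+1 h) - f (x + row_trunc k h) - h 0 k *: D k).
Proof.
pose F k := f (x + row_trunc k h).
rewrite sumrB -(big_mkord xpredT (fun k => F k.+1 - F k)) telescope_sumr //.
by rewrite /F row_trunc_full row_trunc0 addr0.
Qed.

Lemma partial_increment_le (k : 'I_n) h (d eps : R) :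
  (forall y, ball x d y -> derivable f y (e k)) ->
  (forall y, ball x d y -> `|D k - 'D_(e k) f y| <= eps) -> `|h| < d ->
  `|f (x + row_trunc k.+1 h) - f (x + row_trunc k h) - h 0 k *: D k| <= `|h| * eps.
Proof.
move=> Df_near Df_close hd.
have ball_line c : `|c| <= `|h 0 k| -> ball x d (x + row_trunc k h + c *: e k).
  move=> ck; rewrite -ball_normE /= -addrA opprD addrA subrr add0r normrN.
  exact: le_lt_trans (norm_row_trunc_line ck) hd.
have eps0 : 0 <= eps.
  exact: le_trans (normr_ge0 _) (Df_close x (ballxx _ (le_lt_trans (normr_ge0 h) hd))).
apply: mx_norm_le => [|i j]; first by rewrite mulr_ge0.
pose g t := f (x + row_trunc k h + t *: e k) i j.
have Dg (c : R) : `|c| <= `|h 0 k| ->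
    is_derive c 1 g ('D_(e k) f (x + row_trunc k h + c *: e k) i j).
  move=> /ball_line /Df_near Df.
  have [DF <-] := is_derive_coord i j Df.
  exact: is_derive_along_line.
have [c /ball_line /Df_close Dc_le g_incr] := MVT_from0 Dg.
have g0 : g 0 = f (x + row_trunc k h) i j by rewrite /g scale0r addr0.
have gh : g (h 0 k) = f (x + row_trunc k.+1 h) i j by rewrite /g row_truncS addrA.
rewrite !mxE -g0 -gh g_incr.
rewrite mulrC -mulrBr normrM ler_pM //; first exact: mx_coord_le_norm.
apply: le_trans Dc_le; rewrite distrC.
by apply: le_trans (mx_coord_le_norm _ i j); rewrite !mxE.
Qed.

Lemma continuous_partials_differentiable :
  (\forall y \near x, forall k, derivable f y (e k)) ->
  (forall k, {for x, continuous (fun y => 'D_(e k) f y)}) ->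
  differentiable f x.
Proof.
move=> Df_near Dfc.
pose L : {linear 'rV[R]_n -> 'rV[R]_m} :=
  HB.pack lin_partials (GRing.isLinear.Build _ _ _ _ _ lin_partials_is_linear).
have Lc : continuous L := continuous_lin_partials.
suff Lo : f \o shift x = cst (f x) + (L : _ -> _) +o_ (0 : 'rV[R]_n) id.
  by apply/diff_locallyP; rewrite (diff_unique Lc Lo).
apply/eqaddoP => eps eps0; pose eps' := eps / n.+1%:R.
have eps'0 : 0 < eps' by rewrite divr_gt0.
have : \forall y \near x,
    (forall k, derivable f y (e k)) /\ (forall k, `|D k - 'D_(e k) f y| <= eps').
  exact: filterI Df_near (filter_forall _ (fun k => cvgr_dist_le _ _ (Dfc k) _ eps'0)).
move=> /nbhs_ballP[d d0 near_x]; apply/nbhs_ballP; exists d => // h.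
rewrite -ball_normE /= sub0r normrN => hd.
have incr_le k := partial_increment_le (fun y xy => (near_x y xy).1 k)
                                       (fun y xy => (near_x y xy).2 k) hd.
have -> : (f \o shift x - (cst (f x) + L)) h = f (x + h) - f x - lin_partials h.
  by rewrite -[LHS]/(f (h + x) - (f x + lin_partials h)) (addrC h) opprD addrA.
rewrite increment_telescope (le_trans (ler_norm_sum _ _ _)) //.
apply: le_trans (ler_sum _ (fun k _ => incr_le k)) _.
rewrite sumr_const card_ord -mulr_natr -mulrA mulrC ler_wpM2r // /eps'.
by rewrite mulrAC ler_pdivrMr // ler_pM2l // ler_nat.
Qed.

End ContinuousPartials.

Lemma smooth_on_differentiable (R : realType) n m (U : set 'rV[R]_n)
    (f : 'rV[R]_n -> 'rV[R]_m) x :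
  open U -> smooth_on U f -> U x -> differentiable f x.
Proof.
move=> oU sf Ux; apply: continuous_partials_differentiable => [|k].
  by near=> y => k; apply: (sf [::] y _).2; near: y; exact: open_nbhs_nbhs.
exact: (sf [:: _] x Ux).1.
Unshelve. all: by end_near.
Qed.

Section ProductSection.
Variables (R : realType) (V W Z : normedModType R) (p : V).
Implicit Type F : V * W -> Z.

Let shift_section F z v :
  (fun h : R => h^-1 *: (((fun y => F (p, y)) \o shift z) (h *: v) - F (p, z))) =
  (fun h : R => h^-1 *: ((F \o shift (p, z)) (h *: (0, v)) - F (p, z))).
Proof.
apply: funext => h /=; congr (_ *: (F _ - _)).
by apply/pair_equal_spec; rewrite /= scaler0 add0r.
Qed.

Lemma derivable_section F z v :
  derivable F (p, z) (0, v) -> derivable (fun y => F (p, y)) z v.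
Proof. by rewrite /derivable shift_section. Qed.

Lemma derive_section F z v : 'D_v (fun y => F (p, y)) z = 'D_((0 : V), v) F (p, z).
Proof. by rewrite /derive shift_section. Qed.

Lemma iterD_section F vs :
  Defs.iterD vs (fun y => F (p, y)) =
  fun y => Defs.iterD [seq ((0 : V), v) | v <- vs] F (p, y).
Proof.
elim: vs => //= v vs IH; apply: funext => y.
by rewrite IH derive_section.
Qed.

Lemma smooth_on_section F : smooth_on setT F -> smooth_on setT (fun y => F (p, y)).
Proof.
move=> sF vs y _; rewrite iterD_section; split => [|v].
  apply: continuous_comp; last exact: (sF _ _ I).1.
  by apply: (@cvg_pair _ _ _ (nbhs y) (nbhs p) (nbhs y)); [exact: cvg_cst | exact: cvg_id].
exact/derivable_section/(sF _ _ I).2.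
Qed.

End ProductSection.

Section LeftTranslation.
Variables (R : realType) (n : nat) (G : GradedGroup R n).
Implicit Types p u w y : 'rV[R]_n.

Lemma gmul_differentiable p y : differentiable (gmul G p) y.
Proof.
exact: smooth_on_differentiable openT (smooth_on_section p (gmul_smooth G)) I.
Qed.

Lemma gmulVx p : gmul G (ginv G p) p = 0.
Proof. by have := gmul_line G p (-1) 1; rewrite scaleN1r scale1r addNr scale0r. Qed.

Lemma gmulxV p : gmul G p (ginv G p) = 0.
Proof. by have := gmul_line G p 1 (-1); rewrite scaleN1r scale1r addrN scale0r. Qed.

Lemma D0L_jacobian p : D0L G p = 'J (gmul G p) 0.
Proof. by apply/matrixP => k l; rewrite !mxE deriveE //; exact: gmul_differentiable. Qed.

Lemma mul_D0L p u : u *m D0L G p = 'd (gmul G p) 0 u.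
Proof. by rewrite D0L_jacobian mul_rV_lin1. Qed.

Lemma mul_invmx_D0L p w : w *m invmx (D0L G p) = 'd (gmul G (ginv G p)) p w.
Proof.
have dL_inv u : 'd (gmul G (ginv G p)) p u *m D0L G p = u.
  have LK : gmul G p \o gmul G (ginv G p) = id.
    by apply: funext => y /=; rewrite gmulA gmulxV gmul0x.
  have := diff_comp (gmul_differentiable (ginv G p) p) (gmul_differentiable p _).
  rewrite LK gmulVx mul_D0L => /(congr1 (fun L => L u)) /= <-.
  by rewrite (@diff_val _ _ _ _ _ _ _ (is_diff_id p)).
have D0L_linv : lin1_mx ('d (gmul G (ginv G p)) p) *m D0L G p = 1%:M.
  by apply/row_matrixP => i; rewrite !rowE mulmxA mul_rV_lin1 dL_inv mulmx1.
have [_ D0L_unit] := mulmx1_unit D0L_linv.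
by rewrite -[in LHS](dL_inv w) mulmxK.
Qed.

End LeftTranslation.

Section Projection.
Variables (R : realType) (m : nat) (H : GradedGroup R m) (i : nat).
Implicit Types y z : 'rV[R]_m.

Lemma prZ (a : R) y : pr H i (a *: y) = a *: pr H i y.
Proof. by apply/rowP => k; rewrite !mxE; case: ifP => //; rewrite mulr0. Qed.

Lemma prB y z : pr H i (y - z) = pr H i y - pr H i z.
Proof. by apply/rowP => k; rewrite !mxE; case: ifP => //; rewrite subr0. Qed.

Lemma norm_pr_le y : `|pr H i y| <= `|y|.
Proof.
apply: mx_norm_le => // i0 k; rewrite !mxE; case: ifP => _; last by rewrite normr0.
exact: mx_coord_le_norm.
Qed.

Lemma pr_continuous : continuous (pr H i).
Proof.
move=> y; apply/(@cvgrPdist_le _ _ _ (nbhs y)) => e e0.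
apply: filterS (cvgr_dist_le _ _ cvg_id _ e0) => z yz.
by rewrite -prB (le_trans (norm_pr_le _)).
Qed.

End Projection.

Section RescaledLimits.
Variable R : realType.

Lemma cvg_quotient0 (W : normedModType R) (g : R -> W) :
  derivable g 0 1 -> g 0 = 0 -> (fun t => t^-1 *: g t) @ 0^' --> 'D_1 g 0.
Proof.
move=> Dg g0; suff -> : (fun t => t^-1 *: g t) =
    (fun h => h^-1 *: ((g \o shift 0) (h *: 1) - g 0)) by exact: Dg.
by apply: funext => h; rewrite g0 subr0 /= addr0 [h *: 1]mulr1.
Qed.

Lemma exprn_at_right0 j : (0 < j)%N -> (fun e : R => e ^+ j) @ 0^'+ --> 0^'.
Proof.
move=> j0 A /nbhs_ballP[r r0 rA]; apply/nbhs_ballP.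
exists (Num.min 1 r); first by rewrite /= lt_min ltr01 r0.
move=> e /=; rewrite -ball_normE /= sub0r normrN lt_min => /andP[e1 er] e0.
rewrite gtr0_norm // in e1 er; apply: rA; last by rewrite expf_neq0 // gt_eqF.
rewrite -ball_normE /= sub0r normrN ger0_norm ?exprn_ge0 ?ltW //.
by rewrite (le_lt_trans (ler_iXnr _ _ _)) // ltW.
Qed.

Lemma cvg_rescale_exprn (W : normedModType R) (q : R -> W) (l : W) j :
  (0 < j)%N -> (fun t => t^-1 *: q t) @ 0^' --> l ->
  (fun e => e ^- j *: q (e ^+ j)) @ 0^'+ --> l.
Proof. by move=> j0; apply: (cvg_comp _ _ (exprn_at_right0 j0)). Qed.

End RescaledLimits.

Lemma cvg_Phix_ray (R : realType) n m (G : GradedGroup R n) (H : GradedGroup R m)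
    (U : set 'rV[R]_n) (Phi : 'rV[R]_n -> 'rV[R]_m) x V :
  open U -> smooth_on U Phi -> U x ->
  (fun t => t^-1 *: Phix G H Phi x (t *: V)) @ 0^' --> dfrak G H Phi x V.
Proof.
move=> oU sPhi Ux.
have dPhi_x : differentiable Phi x := smooth_on_differentiable oU sPhi Ux.
pose ray (t : R) := t *: V.
have dray : differentiable ray 0 := @ex_diff _ _ _ _ _ _ _ (is_diff_scalel 0 V).
pose c := gmul G x \o ray.
have c0 : c 0 = x by rewrite /c /ray /= scale0r gmulx0.
have dc : differentiable c 0 := differentiable_comp dray (gmul_differentiable G x _).
have dPhi : differentiable Phi (c 0) by rewrite c0.
have dPhic : differentiable (Phi \o c) 0 := differentiable_comp dc dPhi.
pose g := gmul H (ginv H (Phi x)) \o (Phi \o c).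
have dg : differentiable g 0 := differentiable_comp dPhic (gmul_differentiable H _ _).
have -> : dfrak G H Phi x V = 'D_1 g 0.
  rewrite /dfrak mul_invmx_D0L mul_D0L (deriveE _ dPhi_x) (deriveE _ dg).
  rewrite (diff_comp dPhic (gmul_differentiable H _ _)) /= c0.
  rewrite (diff_comp dc dPhi) /= c0 (diff_comp dray (gmul_differentiable G x _)) /=.
  by rewrite (@diff_val _ _ _ _ _ _ _ (is_diff_scalel 0 V)) /ray scale0r scale1r.
apply: cvg_quotient0; first exact: diff_derivable.
by rewrite /Phix scale0r gmulx0 gmulVx.
Qed.
Arguments cvg_Phix_ray {R n m} G H {U Phi x} V.

Unset Implicit Arguments.

Theorem lemma2p6 (R : realType) (n m : nat) (G : GradedGroup R n) (H : GradedGroup R m)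
    (U : set 'rV[R]_n) (Phi : 'rV[R]_n -> 'rV[R]_m) (x : 'rV[R]_n) :
  open U -> smooth_on U Phi -> U x ->
  forall (i j : nat), (1 <= i)%N -> (1 <= j)%N ->
  forall V : 'rV[R]_n, in_layer G j V ->
    let F := fun eps : R =>
      eps ^- i *: pr H i (lnG H (Phix G H Phi x (expG G (eps ^+ j *: V)))) in
    ((j > i)%N -> F @ 0^'+ --> (0 : 'rV[R]_m)) /\
    (j = i -> F @ 0^'+ --> pr H i (dfrak G H Phi x V)).
Proof.
move=> oU sPhi Ux i j i1 j1 V _ F.
pose Q eps := eps ^- j *: Phix G H Phi x (eps ^+ j *: V).
have prQ : pr H i (Q eps) @[eps --> 0^'+] --> pr H i (dfrak G H Phi x V).
  apply: continuous_cvg; first exact: pr_continuous.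
  exact: cvg_rescale_exprn j1 (cvg_Phix_ray G H V oU sPhi Ux).
split => [ij|ji]; last first.
  have -> : F = fun eps => pr H i (Q eps) by apply: funext => eps; rewrite /F /Q ji prZ.
  exact: prQ.
have exp_split (eps : R) : eps ^- i = eps ^+ (j - i) * eps ^- j.
  have [->|eps0] := eqVneq eps 0.
    by rewrite !expr0n !gtn_eqF ?subn_gt0 // invr0 mul0r.
  by rewrite expfB // mulrAC divff ?mul1r // expf_neq0.
have -> : F = fun eps => eps ^+ (j - i) *: pr H i (Q eps).
  by apply: funext => eps; rewrite /F /Q prZ scalerA exp_split.
rewrite -(scale0r (pr H i (dfrak G H Phi x V))); apply: cvgZ prQ.
have := @exprn_continuous R (j - i)%N 0.
rewrite /continuous_at /= expr0n gtn_eqF ?subn_gt0 //.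
exact: cvg_at_right_filter.
Qed.
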